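(* Let $\rho$ and $\sigma$ be Hermitian matrices acting on the same finite-dimensional complex Hilbert space such that $\operatorname{tr}(\rho^{2})\le 1$ and $\operatorname{tr}(\sigma^{2})\le 1$, with $\max[\operatorname{tr}(\rho^2),\operatorname{tr}(\sigma^2)]>0$. Then $$\frac{\operatorname{tr}(\rho\sigma)}{\max[\operatorname{tr}(\rho^{2}),\operatorname{tr}(\sigma^{2})]}\;\le\;\operatorname{tr}(\rho\sigma)+\sqrt{1-\operatorname{tr}(\rho^{2})}\,\sqrt{1-\operatorname{tr}(\sigma^{2})}.$$ That is, $\mathcal{F}_2(\rho,\sigma)\le\mathcal{F}_{N}(\rho,\sigma)$.
   Context: The Hilbert–Schmidt fidelity is $\mathcal{F}_2(\rho,\sigma)=\operatorname{tr}(\rho\sigma)/\max[\operatorname{tr}(\rho^2),\operatorname{tr}(\sigma^2)]$ (defined when the denominator is nonzero), and the super-fidelity is $\mathcal{F}_N(\rho,\sigma)=\operatorname{tr}(\rho\sigma)+\sqrt{1-\operatorname{tr}(\rho^2)}\sqrt{1-\operatorname{tr}(\sigma^2)}$. *)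

From HB Require Import structures.
From mathcomp Require Import all_boot all_order all_algebra.
From mathcomp Require Import reals.
From mathcomp Require Export complex.
Set Implicit Arguments. Unset Strict Implicit. Unset Printing Implicit Defensive.
Import Order.TTheory GRing.Theory Num.Theory.
Local Open Scope ring_scope.

Definition is_hermitian (C : numClosedFieldType) (n : nat) (A : 'M[C]_n) : Prop :=
  A^T = map_mx Num.conj A.

Definition HS_fidelity (C : numClosedFieldType) (n : nat) (rho sigma : 'M[C]_n) : C :=
  \tr (rho *m sigma) / Num.max (\tr (rho *m rho)) (\tr (sigma *m sigma)).

Definition super_fidelity (C : numClosedFieldType) (n : nat) (rho sigma : 'M[C]_n) : C :=
  \tr (rho *m sigma) + sqrtC (1 - \tr (rho *m rho)) * sqrtC (1 - \tr (sigma *m sigma)).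

From HB Require Import structures.
From mathcomp Require Import all_boot all_order all_algebra.
From mathcomp Require Import reals complex ring lra.
Import Order.TTheory GRing.Theory Num.Theory.
Set Implicit Arguments.
Local Open Scope ring_scope.

(* For Hermitian X and Y, tr(XY) = sum_ij X_ij conj(Y_ij) is the Frobenius inner
   product, so a := tr(rho^2), b := tr(sigma^2) and c := tr(rho sigma) are real and
   c^2 <= ab. Taking a <= b, the claim c/b <= c + sqrt((1-a)(1-b)) reduces to
   c(1-b) <= b sqrt((1-a)(1-b)); for c > 0 square both sides:
   c^2(1-b)^2 <= ab(1-b)^2 <= b^2(1-a)(1-b), where the last step is exactly a <= b. *)

Section HermitianTrace.
Variables (C : numClosedFieldType) (n : nat).
Implicit Types X Y : 'M[C]_n.

Lemma hermitianE X i j : is_hermitian X -> X j i = (X i j)^*.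
Proof. by move=> hX; have := congr1 (fun M : 'M[C]_n => M i j) hX; rewrite !mxE. Qed.

Lemma mxtrace_mul_hermitian X Y : is_hermitian Y ->
  \tr (X *m Y) = \sum_i \sum_j X i j * (Y i j)^*.
Proof.
move=> hY; rewrite /mxtrace; apply: eq_bigr => i _; rewrite mxE.
by apply: eq_bigr => j _; rewrite (hermitianE i j hY).
Qed.

Lemma hermitian_mxtrace_real X Y :
  is_hermitian X -> is_hermitian Y -> \tr (X *m Y) \is Num.real.
Proof.
move=> hX hY; rewrite CrealE; apply/eqP.
rewrite [RHS]mxtrace_mulC !mxtrace_mul_hermitian // rmorph_sum; apply: eq_bigr => i _.
by rewrite rmorph_sum; apply: eq_bigr => j _; rewrite rmorphM /= conjCK mulrC.
Qed.

Lemma hermitian_mxtrace_sqr_ge0 X : is_hermitian X -> 0 <= \tr (X *m X).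
Proof.
move=> hX; rewrite mxtrace_mul_hermitian //.
by apply: sumr_ge0 => i _; apply: sumr_ge0 => j _; apply: mul_conjC_ge0.
Qed.

Lemma hermitian_mxtrace_sqr_eq0 X : is_hermitian X -> \tr (X *m X) = 0 -> X = 0.
Proof.
move=> hX; rewrite mxtrace_mul_hermitian // => tr0; apply/matrixP => i j.
have row_ge0 k : 0 <= \sum_l X k l * (X k l)^*.
  by apply: sumr_ge0 => l _; apply: mul_conjC_ge0.
have row0 : \sum_l X i l * (X i l)^* = 0 := psumr_eq0P (fun k _ => row_ge0 k) tr0 isT.
have /eqP : X i j * (X i j)^* = 0 := psumr_eq0P (fun l _ => mul_conjC_ge0 _) row0 isT.
by rewrite mul_conjC_eq0 mxE => /eqP.
Qed.

Lemma hermitianBZ X Y t :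
  is_hermitian X -> is_hermitian Y -> t \is Num.real -> is_hermitian (X - t *: Y).
Proof.
move=> hX hY /CrealP tr; apply/matrixP => i j; rewrite !mxE.
by rewrite (hermitianE i j hX) (hermitianE i j hY) rmorphB rmorphM /= tr.
Qed.

Lemma hermitian_mxtrace_CauchySchwarz X Y : is_hermitian X -> is_hermitian Y ->
  \tr (X *m Y) ^+ 2 <= \tr (X *m X) * \tr (Y *m Y).
Proof.
move=> hX hY; have [/(hermitian_mxtrace_sqr_eq0 hY) ->|b_neq0] := eqVneq (\tr (Y *m Y)) 0.
  by rewrite !(mulmx0, linear0) expr0n mulr0.
have b_gt0 : 0 < \tr (Y *m Y) by rewrite lt_def b_neq0 hermitian_mxtrace_sqr_ge0.
set a := \tr (X *m X); set b := \tr (Y *m Y); set c := \tr (X *m Y).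
have c_real : c \is Num.real by apply: hermitian_mxtrace_real.
have t_real : c / b \is Num.real by rewrite rpred_div // gtr0_real.
(* t = c/b minimizes tr((X - tY)^2) = a - 2tc + t^2 b, the minimum being a - c^2/b. *)
have := hermitian_mxtrace_sqr_ge0 (hermitianBZ _ hX hY t_real).
rewrite mulmxBl !mulmxBr -!scalemxAl -!scalemxAr !linearB /= !linearZ /=.
rewrite [\tr (Y *m X)]mxtrace_mulC -/a -/b -/c.
have -> : a - c / b * c - (c / b * c - c / b * (c / b * b)) = (a * b - c ^+ 2) / b.
  by field; rewrite gt_eqF.
by rewrite pmulr_lge0 ?invr_gt0 // subr_ge0.
Qed.

End HermitianTrace.

Lemma ler_div_max_add_sqrt (R : rcfType) (a b c : R) :
  0 <= a <= 1 -> 0 <= b <= 1 -> 0 < Num.max a b -> c ^+ 2 <= a * b ->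
  c / Num.max a b <= c + Num.sqrt (1 - a) * Num.sqrt (1 - b).
Proof.
wlog ab : a b / a <= b => [hwlog|].
  case/orP: (le_total a b) => [|ba]; first exact: hwlog.
  move=> ha hb; rewrite maxC [a * b]mulrC [_ * Num.sqrt _]mulrC.
  exact: hwlog ba hb ha.
move=> /andP[a0 a1] /andP[b0 b1]; rewrite max_r // => b_gt0 cab.
have [S0 U0] := (sqrtr_ge0 (1 - a), sqrtr_ge0 (1 - b)).
have S2 : Num.sqrt (1 - a) ^+ 2 = 1 - a by rewrite sqr_sqrtr // subr_ge0.
have U2 : Num.sqrt (1 - b) ^+ 2 = 1 - b by rewrite sqr_sqrtr // subr_ge0.
set S := Num.sqrt (1 - a) in S0 S2 *; set U := Num.sqrt (1 - b) in U0 U2 *.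
rewrite ler_pdivrMr //.
suff : c * (1 - b) <= b * (S * U) by nra.
have bSU0 : 0 <= b * (S * U) by rewrite !mulr_ge0 // ltW.
have [c0|c_gt0] := lerP c 0; first by nra.
have cb0 : 0 <= c * (1 - b) by rewrite mulr_ge0 ?subr_ge0 // ltW.
rewrite -ler_sqr ?nnegrE // !exprMn S2 U2.
have : 0 <= b * (1 - b) * (b - a) by rewrite !mulr_ge0 ?subr_ge0 // ltW.
have : c ^+ 2 * (1 - b) ^+ 2 <= a * b * (1 - b) ^+ 2 by rewrite ler_wpM2r ?sqr_ge0.
nra.
Qed.

Local Open Scope complex_scope.

Section RealComplex.
Variable R : rcfType.

Lemma sqrtC_real_complex (x : R) : 0 <= x -> sqrtC x%:C = (Num.sqrt x)%:C.
Proof.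
by move=> x0; rewrite -{1}(sqr_sqrtr x0) rmorphXn sqrCK // ler0c sqrtr_ge0.
Qed.

Lemma max_real_complex (x y : R) : Num.max x%:C y%:C = (Num.max x y)%:C.
Proof. by case: (leP x y) => xy; [rewrite !max_r ?lecR | rewrite !max_l ?lecR ?ltW]. Qed.

End RealComplex.

Theorem theorem1 (R : realType) (n : nat) (rho sigma : 'M[R[i]]_n) :
  is_hermitian rho -> is_hermitian sigma ->
  \tr (rho *m rho) <= 1 -> \tr (sigma *m sigma) <= 1 ->
  0 < Num.max (\tr (rho *m rho)) (\tr (sigma *m sigma)) ->
  HS_fidelity rho sigma <= super_fidelity rho sigma.
Proof.
move=> hr hs a1 b1 m0.
have cs := hermitian_mxtrace_CauchySchwarz hr hs.
have [a0 b0] := (hermitian_mxtrace_sqr_ge0 hr, hermitian_mxtrace_sqr_ge0 hs).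
have /complex_realP[a ea] := hermitian_mxtrace_real hr hr.
have /complex_realP[b eb] := hermitian_mxtrace_real hs hs.
have /complex_realP[c ec] := hermitian_mxtrace_real hr hs.
rewrite /HS_fidelity /super_fidelity ea eb ec max_real_complex
  in a1 b1 m0 cs a0 b0 *.
rewrite -(rmorph1 (real_complex R)) -!rmorphXn -!rmorphM !(lecR, ltcR, ler0c)
  in a1 b1 m0 cs a0 b0 *.
rewrite -!rmorphB !sqrtC_real_complex ?subr_ge0 // -fmorph_div -rmorphM -rmorphD lecR.
by apply: ler_div_max_add_sqrt; rewrite ?a0 ?b0.
Qed.
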